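(* Let $m\ge1$, $q=2^m$, let $n$ be even, let $L$ be a $2$-linear polynomial over $\mathbb F_{q^n}$ such that $\mathrm{Tr}(x^{q+1})+L(x)$ is a permutation polynomial of $\mathbb F_{q^n}$, and let $\lambda$ be a $2$-linear polynomial over $\mathbb F_{q^n}$ that permutes $\mathbb F_{q^n}$. If $\lambda(\mathbb F_{q^2})=\mathbb F_{q^2}$, then both $\mathrm{Tr}(x^{q+1})+\lambda(x)$ and $\mathrm{Tr}(x^{q+1})+L(\lambda(x))$ are permutation polynomials of $\mathbb F_{q^n}$. If $\lambda(\mathbb F_q)=\mathbb F_q$, then $\mathrm{Tr}(x^{q+1})+\lambda(L(x))$ is a permutation polynomial of $\mathbb F_{q^n}$.
   Context: $\mathrm{Tr}$ denotes the trace map of $\mathbb F_{q^n}$ over $\mathbb F_q$. A $2$-linear polynomial over $\mathbb F_{q^n}$ has the form $\sum_{j=0}^{mn-1}a_jx^{2^j}$ with $a_j\in\mathbb F_{q^n}$. Polynomials are regarded as maps on $\mathbb F_{q^n}$. *)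

From mathcomp Require Import all_boot all_order all_algebra all_field.
Set Implicit Arguments. Unset Strict Implicit. Unset Printing Implicit Defensive.
Import GRing.Theory.
Local Open Scope ring_scope.

Definition Tr (F : finFieldType) (m n : nat) (y : F) : F :=
  \sum_(i < n) y ^+ ((2 ^ m) ^ i)%N.

Definition lin2 (F : finFieldType) (k : nat) (a : 'I_k -> F) (x : F) : F :=
  \sum_(j < k) a j * x ^+ (2 ^ j)%N.

(* The subfield F_r of F (r a power of the characteristic): {x | x^r = x}. *)
Definition subF (F : finFieldType) (r : nat) : {set F} := [set x : F | x ^+ r == x].

Definition is_perm (F : finFieldType) (f : F -> F) : Prop := bijective f.

From mathcomp Require Import all_boot all_order all_algebra all_field.
From mathcomp Require Import ring.
Set Implicit Arguments. Unset Strict Implicit. Unset Printing Implicit Defensive.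
Import GRing.Theory.
Local Open Scope ring_scope.

(* Write Q(x) = Tr(x^(q+1)).  In characteristic 2, Q(x + a) = Q(x) + Q(a) + Tr(x * polar a)
   with polar a = a^(q^(n-1)) + a^q, which vanishes exactly on F_{q^2}; and Q vanishes on
   F_{q^2} because n is even.  Since the values Tr(y * d), d <> 0, fill F_q, an additive M
   makes x |-> Q(x) + M(x) injective iff for every a <> 0, M(a) <> 0 when a is in F_{q^2}
   and M(a) is not in F_q otherwise.  This criterion holds for the identity, survives
   L |-> L o lambda when lambda is additive, injective and stabilises F_{q^2}, and survives
   L |-> lambda o L when lambda moreover stabilises F_q. *)

Lemma morph_add0 (V W : zmodType) (f : V -> W) :
  {morph f : x y / x + y} -> f 0 = 0.
Proof. by move=> fD; apply: (@addrI _ (f 0)); rewrite -fD !addr0. Qed.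

Lemma morph_add_eq0 (V W : zmodType) (f : V -> W) x :
  {morph f : x y / x + y} -> injective f -> (f x == 0) = (x == 0).
Proof. by move=> fD finj; rewrite -(morph_add0 fD) (inj_eq finj). Qed.

Lemma morph_add_comp (U V W : zmodType) (f : V -> W) (g : U -> V) :
  {morph f : x y / x + y} -> {morph g : x y / x + y} ->
  {morph (fun x => f (g x)) : x y / x + y}.
Proof. by move=> fD gD x y; rewrite gD fD. Qed.

Lemma injective_shiftP (V : zmodType) (T : eqType) (f : V -> T) :
  injective f <-> forall a, a != 0 -> forall y, f (y + a) != f y.
Proof.
split=> [finj a a_neq0 y | fshift x y fxy].
  by apply: contra a_neq0 => /eqP/finj/eqP; rewrite -subr_eq0 addrAC subrr add0r.
apply/eqP; rewrite -subr_eq0; apply/negPn/negP => /fshift/(_ y).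
by rewrite addrC subrK fxy eqxx.
Qed.

Lemma expr2powD (R : comNzSemiRingType) k (x y : R) : 2 \in [pchar R] ->
  (x + y) ^+ (2 ^ k) = x ^+ (2 ^ k) + y ^+ (2 ^ k).
Proof.
by move=> charR2; apply: exprDn_pchar; rewrite pnatX (pnatE _ (isT : prime 2)) charR2.
Qed.

Lemma lin2D (F : finFieldType) k (c : 'I_k -> F) :
  2 \in [pchar F] -> {morph lin2 c : x y / x + y}.
Proof.
move=> charF2 x y; rewrite /lin2 -big_split.
by apply: eq_bigr => j _; rewrite expr2powD // mulrDr.
Qed.

Section PermCond.
Variables (F : finFieldType) (m : nat).

Local Notation q := (2 ^ m)%N.
Local Notation Fq := (subF F q).
Local Notation Fq2 := (subF F (q ^ 2)).

Definition Qperm_cond (M : F -> F) :=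
  forall a, a != 0 -> (a \in Fq2 -> M a != 0) /\ (a \notin Fq2 -> M a \notin Fq).

Lemma expr_qpow_Fq (c : F) i : c \in Fq -> c ^+ (q ^ i) = c.
Proof.
rewrite inE => /eqP cq; elim: i => [|i IHi]; first by rewrite expr1.
by rewrite expnSr exprM IHi cq.
Qed.

Lemma Fq_sub_Fq2 : {subset Fq <= Fq2}.
Proof. by move=> c c_Fq; rewrite inE expr_qpow_Fq. Qed.

Lemma Qperm_cond_id : Qperm_cond id.
Proof.
by move=> a a_neq0; split=> // a_notFq2; apply: contra a_notFq2; apply: Fq_sub_Fq2.
Qed.

Lemma Qperm_cond_comp_r (L l : F -> F) :
  Qperm_cond L -> {morph l : x y / x + y} -> injective l -> l @: Fq2 = Fq2 ->
  Qperm_cond (fun x => L (l x)).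
Proof.
move=> L_cond lD l_inj l_Fq2 a; have := L_cond (l a).
by rewrite (morph_add_eq0 _ lD l_inj) -{1 2}l_Fq2 mem_imset.
Qed.

Lemma Qperm_cond_comp_l (L l : F -> F) :
  Qperm_cond L -> {morph l : x y / x + y} -> injective l -> l @: Fq = Fq ->
  Qperm_cond (fun x => l (L x)).
Proof.
move=> L_cond lD l_inj l_Fq a /L_cond [La_neq0 La_notFq].
split=> [/La_neq0 | /La_notFq]; first by rewrite (morph_add_eq0 _ lD l_inj).
by rewrite -{2}l_Fq mem_imset.
Qed.

End PermCond.

Section QuadraticTrace.
Variables (F : finFieldType) (m n : nat).
Hypothesis cardF : #|F| = (2 ^ (m * n))%N.

Local Notation q := (2 ^ m)%N.
Local Notation Fq := (subF F q).
Local Notation Fq2 := (subF F (q ^ 2)).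
Local Notation Q x := (Tr m n (x ^+ q.+1)).

Lemma pchar2F : 2 \in [pchar F].
Proof. exact: card_finPcharP cardF _. Qed.

Lemma mn_gt0 : (0 < m * n)%N.
Proof. by have := finNzRing_gt1 F; rewrite cardF -{1}(expn0 2) ltn_exp2l. Qed.

Lemma q_gt1 : (1 < q)%N.
Proof.
by have := mn_gt0; rewrite muln_gt0 => /andP[m_gt0 _]; rewrite -{1}(expn0 2) ltn_exp2l.
Qed.

Lemma n_gt0 : (0 < n)%N.
Proof. by have := mn_gt0; rewrite muln_gt0 => /andP[]. Qed.

Lemma expr_qpowD i (x y : F) : (x + y) ^+ (q ^ i) = x ^+ (q ^ i) + y ^+ (q ^ i).
Proof. by rewrite -expnM expr2powD // pchar2F. Qed.

Lemma expr_qn (x : F) : x ^+ (q ^ n) = x.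
Proof. by rewrite -expnM -cardF expf_card. Qed.

Lemma Fq_addl (x y : F) : x \in Fq -> (x + y \in Fq) = (y \in Fq).
Proof. by rewrite !inE expr2powD ?pchar2F // => /eqP->; rewrite (inj_eq (addrI x)). Qed.

Lemma TrD : {morph Tr m n : x y / x + y : F}.
Proof. by move=> x y; rewrite /Tr -big_split; apply: eq_bigr => i _; rewrite expr_qpowD. Qed.

Lemma Tr_exprq (x : F) : Tr m n (x ^+ q) = Tr m n x.
Proof.
rewrite /Tr; case: n n_gt0 expr_qn => // k _ x_qk.
rewrite big_ord_recr [RHS]big_ord_recl /= -exprM -expnS x_qk expn0 expr1 addrC.
by congr (_ + _); apply: eq_bigr => i _; rewrite -exprM -expnS.
Qed.

Lemma Tr_in_Fq (x : F) : Tr m n x \in Fq.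
Proof.
rewrite inE -{2}Tr_exprq /Tr; apply/eqP.
elim/big_rec2: _ => [|i a b _ <-]; first by rewrite expr0n expn_eq0.
by rewrite expr2powD ?pchar2F // -!exprM mulnC.
Qed.

Lemma TrZ (c z : F) : c \in Fq -> Tr m n (c * z) = c * Tr m n z.
Proof.
move=> c_Fq; rewrite /Tr mulr_sumr; apply: eq_bigr => i _.
by rewrite exprMn (expr_qpow_Fq _ c_Fq).
Qed.

(* Tr is the polynomial sum_(i < n) X^(q^i), of degree below #|F| and not zero. *)
Lemma Tr_neq0 : exists z : F, Tr m n z != 0.
Proof.
pose P : {poly F} := \sum_(i < n) 'X^(q ^ i).
have P_neq0 : P != 0.
  apply/eqP => /(congr1 (coefp 1)) /eqP; rewrite /= coef0 coef_sum.
  rewrite (bigD1 (Ordinal n_gt0)) //= coefXn eqxx big1 ?addr0 ?oner_eq0 // => i i_neq0.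
  move: i_neq0; rewrite -val_eqE /= coefXn -[1%N](expn0 q) eqn_exp2l ?q_gt1 //.
  by rewrite eq_sym => /negbTE ->.
apply/existsP; rewrite -negb_forall; apply: contra P_neq0 => /forallP P_roots.
apply/eqP/(@roots_geq_poly_eq0 _ _ (enum F)); last 2 first.
- exact: enum_uniq.
- rewrite -cardE cardF expnM (leq_trans (size_sum _ _ _)) //.
  by apply/bigmax_leqP => i _; rewrite size_polyXn ltn_exp2l ?q_gt1.
apply/allP => z _; rewrite /root horner_sum.
under eq_bigr do rewrite hornerXn.
exact: P_roots.
Qed.

Lemma Tr_mul_onto (d c : F) : d != 0 -> c \in Fq -> exists y, Tr m n (y * d) = c.
Proof.
move=> d_neq0 c_Fq; have [z Trz_neq0] := Tr_neq0.
have ct_Fq : c / Tr m n z \in Fq.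
  by move: c_Fq (Tr_in_Fq z); rewrite !inE exprMn exprVn => /eqP-> /eqP->.
by exists (c / Tr m n z * z / d); rewrite mulfVK // TrZ // mulfVK.
Qed.

Lemma addr_Tr_mul_neq0P (d c : F) : d != 0 ->
  (forall y, c + Tr m n (y * d) != 0) <-> c \notin Fq.
Proof.
move=> d_neq0; split=> [Tr_neq_c | c_notFq y].
  apply/negP => /(Tr_mul_onto d_neq0) [y Tr_yd].
  by have := Tr_neq_c y; rewrite Tr_yd addrr_pchar2 ?pchar2F ?eqxx.
by apply: contra c_notFq; rewrite addr_eq0 oppr_pchar2 ?pchar2F // => /eqP->; exact: Tr_in_Fq.
Qed.

(* Since Tr (x^q a) = Tr (x a^(q^(n-1))), the polar form Tr (x^q a + x a^q) of Q
   is Tr (x * polar a). *)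
Definition polar (a : F) := a ^+ (q ^ n.-1) + a ^+ q.

Lemma QD (x a : F) : Q (x + a) = Q x + Q a + Tr m n (x * polar a).
Proof.
have Tr_adj : Tr m n (x * a ^+ (q ^ n.-1)) = Tr m n (x ^+ q * a).
  by rewrite -Tr_exprq exprMn -exprM -expnSr prednK ?n_gt0 // expr_qn.
rewrite mulrDr !TrD Tr_adj -!TrD; congr Tr.
by rewrite !exprSr expr2powD ?pchar2F //; ring.
Qed.

Lemma polar_eq0 (a : F) : (polar a == 0) = (a \in Fq2).
Proof.
have polar_q : polar a ^+ q = a + a ^+ (q ^ 2).
  by rewrite expr2powD ?pchar2F // -!exprM -expnSr prednK ?n_gt0 // expr_qn.
have := expf_eq0 (polar a) q; rewrite expn_gt0 /= => <-.
by rewrite polar_q addr_eq0 oppr_pchar2 ?pchar2F // inE eq_sym.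
Qed.

Lemma Q_Fq2 (a : F) : ~~ odd n -> a \in Fq2 -> Q a = 0.
Proof.
move=> n_even a_Fq2; have aq1_Fq : a ^+ q.+1 \in Fq.
  move: a_Fq2; rewrite !inE -exprM mulSn exprD mulnn => /eqP->.
  by rewrite exprSr.
rewrite /Tr; under eq_bigr => i _ do rewrite (expr_qpow_Fq i aq1_Fq).
rewrite sumr_const card_ord -[n]odd_double_half (negbTE n_even) -mul2n mulrnA.
by rewrite mulr2n addrr_pchar2 ?pchar2F // mul0rn.
Qed.

Lemma QM_shift_neq0P (M : F -> F) a : ~~ odd n -> {morph M : x y / x + y} ->
  (forall y, Q (y + a) + M (y + a) != Q y + M y) <->
  (a \in Fq2 -> M a != 0) /\ (a \notin Fq2 -> M a \notin Fq).
Proof.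
move=> n_even MD.
have shift y : Q (y + a) + M (y + a) - (Q y + M y) = Q a + M a + Tr m n (y * polar a).
  by rewrite QD MD; ring.
transitivity (forall y, Q a + M a + Tr m n (y * polar a) != 0).
  by split=> neq y; [rewrite -shift subr_eq0 | rewrite -subr_eq0 shift].
have [a_Fq2 | a_notFq2] := boolP (a \in Fq2).
  have /eqP polar_a0 : polar a == 0 by rewrite polar_eq0.
  have D_eq y : Q a + M a + Tr m n (y * polar a) = M a.
    by rewrite Q_Fq2 // polar_a0 mulr0 (morph_add0 TrD) add0r addr0.
  split=> [/(_ 0) | [Ma_neq0 _] y]; rewrite D_eq; last exact: Ma_neq0.
  by split=> // /negP.
rewrite addr_Tr_mul_neq0P ?polar_eq0 // Fq_addl ?Tr_in_Fq //.
by split=> [? | [_ /(_ isT)]]; first split.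
Qed.

Lemma is_perm_QMP (M : F -> F) : ~~ odd n -> {morph M : x y / x + y} ->
  is_perm (fun x => Q x + M x) <-> Qperm_cond m M.
Proof.
move=> n_even MD; split=> [/bij_inj /injective_shiftP QM_inj a /QM_inj | M_cond].
  exact: (QM_shift_neq0P a n_even MD).1.
by apply/injF_bij/injective_shiftP => a /M_cond; exact: (QM_shift_neq0P a n_even MD).2.
Qed.

End QuadraticTrace.

Theorem mainTheorem14 (F : finFieldType) (m n : nat)
  (hm : (1 <= m)%N) (hn : ~~ odd n) (hF : #|F| = (2 ^ (m * n))%N)
  (aL al : 'I_(m * n) -> F)
  (hL : is_perm (fun x => Tr m n (x ^+ (2 ^ m).+1) + lin2 aL x))
  (hl : is_perm (lin2 al)) :
  (lin2 al @: subF F ((2 ^ m) ^ 2)%N = subF F ((2 ^ m) ^ 2)%N ->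
     is_perm (fun x => Tr m n (x ^+ (2 ^ m).+1) + lin2 al x) /\
     is_perm (fun x => Tr m n (x ^+ (2 ^ m).+1) + lin2 aL (lin2 al x))) /\
  (lin2 al @: subF F (2 ^ m)%N = subF F (2 ^ m)%N ->
     is_perm (fun x => Tr m n (x ^+ (2 ^ m).+1) + lin2 al (lin2 aL x))).
Proof.
have linD k (c : 'I_k -> F) := lin2D c (pchar2F hF).
have permP M MD := is_perm_QMP hF (M := M) hn MD.
have L_cond := (permP _ (linD _ aL)).1 hL.
have l_inj := bij_inj hl.
split=> [l_Fq2 | l_Fq]; first split.
- apply/(permP _ (linD _ al)).
  exact: Qperm_cond_comp_r (@Qperm_cond_id F m) (linD _ al) l_inj l_Fq2.
- apply/(permP _ (morph_add_comp (linD _ aL) (linD _ al))).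
  exact: Qperm_cond_comp_r.
- apply/(permP _ (morph_add_comp (linD _ al) (linD _ aL))).
  exact: Qperm_cond_comp_l.
Qed.
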